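(* Let $L\ge1$ and put $u_\ell=e^{-2\mathcal{C}(\ell-1)/L}$ and $\pi_{(\ell)}=u_\ell/\sum_{\ell'=1}^L u_{\ell'}$ for $\ell=1,\dots,L$. Define, for $x\in[0,1]$, $$g_L(x)=\sum_{\ell=1}^L \pi_{(\ell)}\,\Phi\big(\mu(x,u_\ell\,\mathcal{C}'/R)\big),\qquad g(x)=\frac{2\mathcal{C}}{\nu}\int_0^1 e^{-2\mathcal{C}t}\,\Phi\big(\mu(x,e^{-2\mathcal{C}t}\mathcal{C}'/R)\big)\,dt .$$ Then $g_L(x)\ge g(x)$ for all $x\in[0,1]$, and moreover $g(x)=\frac1\nu\int_{1-\nu}^1\Phi\big(\mu(x,u\,\mathcal{C}'/R)\big)\,du$.
   Context: Fix an integer $M\ge2$, $snr=P/\sigma^2>0$, $\nu=snr/(1+snr)$, $\mathcal{C}=\tfrac12\ln(1+snr)$ (natural logarithm, so $e^{-2\mathcal{C}}=1-\nu$), constants $a\ge 0$, $\mathcal{C}'>0$, $R>0$. $\Phi,\phi$ denote the standard normal distribution function and density. For $x\in[0,1]$ and $u>0$, $$\mu(x,u)=\Big(\sqrt{u/(1-x\nu)}-1\Big)\sqrt{2\log M}-a.$$ *)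

From Stdlib Require Import Reals Lra ClassicalEpsilon.
Open Scope R_scope.

(* Riemann integral of f over [a,b] (oriented as in Stdlib's RiemannInt);
   defined by choice: the value of RiemannInt for any integrability proof
   (RiemannInt is proof-irrelevant). *)
Definition Rint (f : R -> R) (a b : R) : R :=
  epsilon (inhabits 0)
    (fun I => exists pr : Riemann_integrable f a b, RiemannInt pr = I).

Definition std_normal_pdf (t : R) : R := exp (- (t ^ 2) / 2) / sqrt (2 * PI).

Definition std_normal_cdf (z : R) : R :=
  epsilon (inhabits 0)
    (fun l => Un_cv (fun n => Rint std_normal_pdf (- INR n) z) l).

Definition nu_of (snr : R) : R := snr / (1 + snr).
Definition cap_of (snr : R) : R := / 2 * ln (1 + snr).

Definition mu (M : nat) (snr a x u : R) : R :=
  (sqrt (u / (1 - x * nu_of snr)) - 1) * sqrt (2 * ln (INR M)) - a.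

Definition u_l (snr : R) (L l : nat) : R :=
  exp (- 2 * cap_of snr * (INR l - 1) / INR L).

(* g_L(x) = sum_{l=1}^L pi_(l) Phi(mu(x, u_l C'/R)); index k = l-1 *)
Definition gL (M : nat) (snr a C' Rr : R) (L : nat) (x : R) : R :=
  let Z := sum_f_R0 (fun k => u_l snr L (S k)) (L - 1) in
  sum_f_R0 (fun k => (u_l snr L (S k) / Z) *
     std_normal_cdf (mu M snr a x (u_l snr L (S k) * C' / Rr))) (L - 1).

Definition g (M : nat) (snr a C' Rr : R) (x : R) : R :=
  2 * cap_of snr / nu_of snr *
  Rint (fun t => exp (- 2 * cap_of snr * t) *
          std_normal_cdf (mu M snr a x (exp (- 2 * cap_of snr * t) * C' / Rr))) 0 1.

From Coquelicot Require Import Coquelicot.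
From Stdlib Require Import Reals Lra Lia ClassicalEpsilon.
Open Scope R_scope.

(* Write [h_x(u) = Phi(mu(x, u C'/R))] and [q = e^{-2C/L}], so that [u_l = q^(l-1)],
   [q^L = e^{-2C} = 1 - nu] and the normalised weights are
   [pi_(l) = q^(l-1) (1-q) / (1 - q^L) = (q^(l-1) - q^l) / nu].
   Hence [g_L(x) = (1/nu) sum_l (q^(l-1) - q^l) h_x(q^(l-1))] is (1/nu times) an upper
   Darboux sum of [h_x] on [1-nu, 1], which dominates the integral because [h_x] is
   nondecreasing; and the substitution [u = e^{-2Ct}] turns [g(x)] into
   [(1/nu) int_{1-nu}^1 h_x], which gives both claims at once. *)

Lemma Rint_RInt (f : R -> R) (a b : R) : ex_RInt f a b -> Rint f a b = RInt f a b.
Proof.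
  intros Hf. unfold Rint.
  destruct (epsilon_spec (inhabits 0)
              (fun I => exists pr : Riemann_integrable f a b, RiemannInt pr = I))
    as [pr <-].
  - exists (RInt f a b), (ex_RInt_Reals_0 f a b Hf). symmetry. apply RInt_Reals.
  - symmetry. apply RInt_Reals.
Qed.

Lemma ex_RInt_continuous_R (f : R -> R) (a b : R) :
  (forall t, continuous f t) -> ex_RInt f a b.
Proof. intros Hf. apply (ex_RInt_continuous (V := R_CompleteNormedModule)); auto. Qed.

Lemma ex_derive_continuous_R (f : R -> R) (t : R) : ex_derive f t -> continuous f t.
Proof. apply (ex_derive_continuous (K := R_AbsRing) (V := R_NormedModule)). Qed.

Lemma std_normal_pdf_continuous (t : R) : continuous std_normal_pdf t.
Proof. apply ex_derive_continuous_R. unfold std_normal_pdf. auto_derive. auto. Qed.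

Lemma std_normal_pdf_pos (t : R) : 0 < std_normal_pdf t.
Proof.
  apply Rdiv_lt_0_compat; [apply exp_pos |].
  apply sqrt_lt_R0. generalize PI_RGT_0. lra.
Qed.

Lemma std_normal_pdf_integrable (a b : R) : ex_RInt std_normal_pdf a b.
Proof. apply ex_RInt_continuous_R, std_normal_pdf_continuous. Qed.

Lemma std_normal_pdf_chasles (a b c : R) :
  RInt std_normal_pdf a b + RInt std_normal_pdf b c = RInt std_normal_pdf a c.
Proof.
  apply (RInt_Chasles (V := R_CompleteNormedModule)); apply std_normal_pdf_integrable.
Qed.

Lemma std_normal_pdf_RInt_nonneg (a b : R) : a <= b -> 0 <= RInt std_normal_pdf a b.
Proof.
  intros Hab. apply RInt_ge_0; [exact Hab | apply std_normal_pdf_integrable |].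
  intros t _. left. apply std_normal_pdf_pos.
Qed.

(* An exponential majorant of the density, equal to its own derivative:
   [t^2/2 >= -t - 1/2] because [(t+1)^2 >= 0]. *)
Definition pdf_majorant (t : R) : R := exp (/ 2 + t) / sqrt (2 * PI).

Lemma pdf_majorant_derive (t : R) : is_derive pdf_majorant t (pdf_majorant t).
Proof. unfold pdf_majorant. auto_derive; [auto | lra]. Qed.

Lemma std_normal_pdf_le_majorant (t : R) : std_normal_pdf t <= pdf_majorant t.
Proof.
  apply Rmult_le_compat_r.
  - left. apply Rinv_0_lt_compat, sqrt_lt_R0. generalize PI_RGT_0. lra.
  - assert (Hexponent : - (t ^ 2) / 2 <= / 2 + t).
    { assert (Hsq := pow2_ge_0 (t + 1)). simpl in *. nra. }
    destruct Hexponent as [Hlt | ->]; [left; now apply exp_increasing | right; reflexivity].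
Qed.

Lemma std_normal_left_tail_bounded (n : nat) :
  RInt std_normal_pdf (- INR n) 0 <= pdf_majorant 0.
Proof.
  assert (Hcont : forall t, continuous pdf_majorant t).
  { intros t. apply ex_derive_continuous_R. eexists. apply pdf_majorant_derive. }
  assert (Hint : RInt pdf_majorant (- INR n) 0 = pdf_majorant 0 - pdf_majorant (- INR n)).
  { apply is_RInt_unique, (is_RInt_derive (V := R_CompleteNormedModule)); intros t _.
    - apply pdf_majorant_derive.
    - apply Hcont. }
  assert (Hpos : 0 < pdf_majorant (- INR n)).
  { apply Rdiv_lt_0_compat; [apply exp_pos |].
    apply sqrt_lt_R0. generalize PI_RGT_0. lra. }
  apply Rle_trans with (RInt pdf_majorant (- INR n) 0); [| lra].
  apply RInt_le.
  - generalize (pos_INR n). lra.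
  - apply std_normal_pdf_integrable.
  - apply ex_RInt_continuous_R, Hcont.
  - intros t _. apply std_normal_pdf_le_majorant.
Qed.

Lemma std_normal_cdf_limit (z l : R) :
  Un_cv (fun n => Rint std_normal_pdf (- INR n) z) l -> std_normal_cdf z = l.
Proof.
  intros Hl. unfold std_normal_cdf.
  apply (UL_sequence (fun n => Rint std_normal_pdf (- INR n) z)); [| exact Hl].
  apply (epsilon_spec (inhabits 0)
           (fun l0 => Un_cv (fun n => Rint std_normal_pdf (- INR n) z) l0)).
  now exists l.
Qed.

(* [Phi z = c + int_0^z phi], where [c] is the limit of the increasing bounded tails. *)
Lemma std_normal_cdf_decomposition :
  exists c, forall z, std_normal_cdf z = c + RInt std_normal_pdf 0 z.
Proof.
  set (tail := fun n => RInt std_normal_pdf (- INR n) 0).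
  destruct (growing_cv tail) as [c Hc].
  - intros n. unfold tail.
    rewrite <- (std_normal_pdf_chasles (- INR (S n)) (- INR n) 0).
    assert (0 <= RInt std_normal_pdf (- INR (S n)) (- INR n)); [| lra].
    apply std_normal_pdf_RInt_nonneg. rewrite S_INR. lra.
  - exists (pdf_majorant 0). intros y [n ->]. apply std_normal_left_tail_bounded.
  - exists c. intros z. apply std_normal_cdf_limit.
    apply Un_cv_ext with (fun n => tail n + RInt std_normal_pdf 0 z).
    + intros n. rewrite Rint_RInt by apply std_normal_pdf_integrable.
      apply std_normal_pdf_chasles.
    + apply CV_plus; [exact Hc |].
      intros e He. exists 0%nat. intros n _. unfold R_dist.
      rewrite Rminus_diag, Rabs_R0. exact He.
Qed.

(* By the decomposition, [Phi] is an antiderivative of [phi] up to a constant. *)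
Lemma std_normal_cdf_continuous (z : R) : continuous std_normal_cdf z.
Proof.
  destruct std_normal_cdf_decomposition as [c Hc].
  apply (continuous_ext (fun z => c + RInt std_normal_pdf 0 z)).
  { intros t. symmetry. apply Hc. }
  apply (continuous_plus (K := R_AbsRing) (V := R_NormedModule) (fun _ => c)).
  - apply continuous_const.
  - apply ex_derive_continuous_R. exists (std_normal_pdf z).
    apply (is_derive_RInt (V := R_NormedModule) _ _ 0).
    + apply filter_forall. intros t.
      apply (RInt_correct (V := R_CompleteNormedModule)), std_normal_pdf_integrable.
    + apply std_normal_pdf_continuous.
Qed.

Lemma std_normal_cdf_nondecreasing (z1 z2 : R) :
  z1 <= z2 -> std_normal_cdf z1 <= std_normal_cdf z2.
Proof.
  intros Hz. destruct std_normal_cdf_decomposition as [c Hc]. rewrite !Hc.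
  rewrite <- (std_normal_pdf_chasles 0 z1 z2).
  generalize (std_normal_pdf_RInt_nonneg _ _ Hz). lra.
Qed.

(* A nondecreasing function is dominated on each [w (k+1), w k] by its value at the right end,
   so its integral over [w (n+1), w 0] is at most the upper sum along the decreasing grid [w]. *)
Lemma RInt_le_upper_sum (h : R -> R) (w : nat -> R) :
  (forall a b, ex_RInt h a b) ->
  (forall u v, u <= v -> h u <= h v) ->
  (forall k, w (S k) <= w k) ->
  forall n, RInt h (w (S n)) (w O) <= sum_f_R0 (fun k => (w k - w (S k)) * h (w k)) n.
Proof.
  intros Hint Hmono Hw.
  assert (Hpiece : forall k, RInt h (w (S k)) (w k) <= (w k - w (S k)) * h (w k)).
  { intros k.
    replace ((w k - w (S k)) * h (w k)) with (RInt (fun _ => h (w k)) (w (S k)) (w k))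
      by (rewrite (RInt_const (V := R_CompleteNormedModule)); reflexivity).
    apply RInt_le; [apply Hw | apply Hint | apply (ex_RInt_const (V := R_CompleteNormedModule)) |].
    intros u Hu. apply Hmono. lra. }
  induction n as [|n IH]; [apply Hpiece |].
  rewrite tech5, <- (RInt_Chasles (V := R_CompleteNormedModule) h _ (w (S n))) by apply Hint.
  rewrite Rplus_comm. apply Rplus_le_compat; [apply IH | apply Hpiece].
Qed.

Lemma exp_substitution_continuous (h : R -> R) (k t : R) :
  (forall u, continuous h u) ->
  continuous (fun t => exp (k * t) * h (exp (k * t))) t.
Proof.
  intros Hh.
  assert (He : continuous (fun t => exp (k * t)) t)
    by (apply ex_derive_continuous_R; auto_derive; auto).
  apply (continuous_mult (K := R_AbsRing) _ _ _ He).
  apply (continuous_comp (fun t => exp (k * t)) h _ He), Hh.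
Qed.

Lemma RInt_exp_substitution (h : R -> R) (k : R) :
  (forall u, continuous h u) ->
  k * RInt (fun t => exp (k * t) * h (exp (k * t))) 0 1 = RInt h 1 (exp k).
Proof.
  intros Hh.
  assert (Hcomp := RInt_comp (V := R_CompleteNormedModule) h
                     (fun t => exp (k * t)) (fun t => k * exp (k * t)) 0 1).
  cbv beta in Hcomp. rewrite Rmult_0_r, exp_0, Rmult_1_r in Hcomp.
  rewrite <- Hcomp.
  - rewrite <- (RInt_scal (V := R_CompleteNormedModule)).
    + apply RInt_ext. intros t _. unfold scal; simpl; unfold mult; simpl. ring.
    + apply ex_RInt_continuous_R. intros t. now apply exp_substitution_continuous.
  - intros t _. apply Hh.
  - intros t _. split.
    + auto_derive; [auto | ring].
    + apply ex_derive_continuous_R. auto_derive. auto.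
Qed.

Lemma geometric_weight (q : R) (m k : nat) : 0 < q < 1 ->
  q ^ k / sum_f_R0 (fun j => q ^ j) m = (q ^ k - q ^ S k) / (1 - q ^ S m).
Proof.
  intros Hq. rewrite tech3 by lra.
  destruct (pow_lt_1_compat q (S m)) as [_ Hlt]; [lra | lia |].
  simpl pow in *. field. lra.
Qed.

Lemma exp_mult_INR (k : nat) (y : R) : exp (INR k * y) = exp y ^ k.
Proof.
  induction k as [|k IH]; simpl pow.
  - now rewrite Rmult_0_l, exp_0.
  - now rewrite S_INR, Rmult_plus_distr_r, Rmult_1_l, exp_plus, IH, Rmult_comm.
Qed.

Lemma nu_of_bounds (snr : R) : 0 < snr -> 0 < nu_of snr < 1.
Proof.
  intros Hs. unfold nu_of. split; [apply Rdiv_lt_0_compat; lra |].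
  apply Rmult_lt_reg_r with (1 + snr); [lra |]. field_simplify; lra.
Qed.

Lemma cap_of_pos (snr : R) : 0 < snr -> 0 < cap_of snr.
Proof.
  intros Hs. unfold cap_of.
  assert (0 < ln (1 + snr)) by (rewrite <- ln_1; apply ln_increasing; lra). lra.
Qed.

Lemma exp_cap_of (snr : R) : 0 < snr -> exp (- 2 * cap_of snr) = 1 - nu_of snr.
Proof.
  intros Hs. unfold cap_of, nu_of.
  replace (- 2 * (/ 2 * ln (1 + snr))) with (- ln (1 + snr)) by field.
  rewrite exp_Ropp, exp_ln by lra. field. lra.
Qed.

Definition grid_ratio (snr : R) (L : nat) : R := exp (- 2 * cap_of snr / INR L).

Lemma grid_ratio_bounds (snr : R) (L : nat) : 0 < snr -> (0 < L)%nat ->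
  0 < grid_ratio snr L < 1.
Proof.
  intros Hs HL. split; [apply exp_pos |].
  rewrite <- exp_0. apply exp_increasing.
  assert (0 < INR L) by (apply lt_0_INR; exact HL).
  assert (0 < cap_of snr) by (apply cap_of_pos; exact Hs).
  unfold Rdiv. assert (0 < / INR L) by (apply Rinv_0_lt_compat; lra). nra.
Qed.

Lemma u_l_grid_ratio (snr : R) (L k : nat) : (0 < L)%nat ->
  u_l snr L (S k) = grid_ratio snr L ^ k.
Proof.
  intros HL. assert (0 < INR L) by (apply lt_0_INR; exact HL).
  unfold u_l, grid_ratio. rewrite <- exp_mult_INR, S_INR. f_equal. field. lra.
Qed.

Lemma grid_ratio_pow_L (snr : R) (L : nat) : 0 < snr -> (0 < L)%nat ->
  grid_ratio snr L ^ L = 1 - nu_of snr.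
Proof.
  intros Hs HL. assert (0 < INR L) by (apply lt_0_INR; exact HL).
  unfold grid_ratio. rewrite <- exp_mult_INR, <- exp_cap_of by exact Hs.
  f_equal. field. lra.
Qed.

Definition Phi_mu (M : nat) (snr a C' Rr x u : R) : R :=
  std_normal_cdf (mu M snr a x (u * C' / Rr)).

Lemma Phi_mu_continuous (M : nat) (snr a C' Rr x u : R) :
  continuous (Phi_mu M snr a C' Rr x) u.
Proof.
  unfold Phi_mu, mu.
  apply (continuous_comp
           (fun u => (sqrt (u * C' / Rr / (1 - x * nu_of snr)) - 1) * sqrt (2 * ln (INR M)) - a)
           std_normal_cdf); [| apply std_normal_cdf_continuous].
  apply (continuous_comp (fun u => sqrt (u * C' / Rr / (1 - x * nu_of snr)))
           (fun y => (y - 1) * sqrt (2 * ln (INR M)) - a)).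
  - apply continuous_sqrt_comp, ex_derive_continuous_R. auto_derive. auto.
  - apply ex_derive_continuous_R. auto_derive. auto.
Qed.

Lemma Phi_mu_nondecreasing (M : nat) (snr a C' Rr x u v : R) :
  0 < snr -> 0 < C' -> 0 < Rr -> 0 <= x <= 1 -> u <= v ->
  Phi_mu M snr a C' Rr x u <= Phi_mu M snr a C' Rr x v.
Proof.
  intros Hs HC HR Hx Huv. apply std_normal_cdf_nondecreasing.
  assert (Hnu := nu_of_bounds snr Hs).
  assert (Hden : 0 < 1 - x * nu_of snr) by nra.
  apply Rplus_le_compat_r, Rmult_le_compat_r; [apply sqrt_pos |].
  apply Rplus_le_compat_r, sqrt_le_1_alt.
  unfold Rdiv. apply Rmult_le_compat_r; [left; apply Rinv_0_lt_compat; exact Hden |].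
  apply Rmult_le_compat_r; [left; apply Rinv_0_lt_compat; exact HR |].
  apply Rmult_le_compat_r; lra.
Qed.

Lemma gL_upper_sum (M : nat) (snr a C' Rr x : R) (L : nat) : 0 < snr -> (0 < L)%nat ->
  let q := grid_ratio snr L in
  gL M snr a C' Rr L x =
    / nu_of snr * sum_f_R0 (fun k => (q ^ k - q ^ S k) * Phi_mu M snr a C' Rr x (q ^ k)) (L - 1).
Proof.
  intros Hs HL q.
  assert (Hq := grid_ratio_bounds snr L Hs HL).
  assert (Hnu := nu_of_bounds snr Hs).
  unfold gL. rewrite scal_sum. apply sum_eq. intros k _.
  rewrite !u_l_grid_ratio by exact HL.
  rewrite (sum_eq _ (fun j => q ^ j)) by (intros j _; apply u_l_grid_ratio, HL).
  rewrite geometric_weight by exact Hq.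
  replace (S (L - 1)) with L by lia. unfold q. rewrite grid_ratio_pow_L by assumption.
  unfold Phi_mu. field. lra.
Qed.

(* [g(x) = (1/nu) int_{1-nu}^1 h_x], by the substitution [u = e^{-2Ct}]. *)
Lemma g_as_RInt (M : nat) (snr a C' Rr x : R) : 0 < snr ->
  g M snr a C' Rr x = / nu_of snr * RInt (Phi_mu M snr a C' Rr x) (1 - nu_of snr) 1.
Proof.
  intros Hs. assert (Hnu := nu_of_bounds snr Hs).
  set (h := Phi_mu M snr a C' Rr x).
  set (F := fun t => exp (- 2 * cap_of snr * t) * h (exp (- 2 * cap_of snr * t))).
  assert (Hsubst : - 2 * cap_of snr * RInt F 0 1 = - RInt h (1 - nu_of snr) 1).
  { rewrite (RInt_exp_substitution h) by apply Phi_mu_continuous.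
    rewrite exp_cap_of by exact Hs.
    symmetry. apply (opp_RInt_swap (V := R_CompleteNormedModule)).
    apply ex_RInt_continuous_R, Phi_mu_continuous. }
  unfold g. change (2 * cap_of snr / nu_of snr * Rint F 0 1 = / nu_of snr * RInt h (1 - nu_of snr) 1).
  rewrite Rint_RInt.
  - field_simplify_eq; lra.
  - apply ex_RInt_continuous_R. intros t.
    apply exp_substitution_continuous, Phi_mu_continuous.
Qed.

Theorem mainTheorem3 (M : nat) (snr a C' Rr : R) (L : nat)
  (hM : (2 <= M)%nat) (hsnr : 0 < snr) (ha : 0 <= a) (hC' : 0 < C') (hR : 0 < Rr)
  (hL : (1 <= L)%nat) :
  forall x : R, 0 <= x <= 1 ->
    gL M snr a C' Rr L x >= g M snr a C' Rr x /\
    g M snr a C' Rr x =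
      / nu_of snr * Rint (fun u => std_normal_cdf (mu M snr a x (u * C' / Rr)))
                          (1 - nu_of snr) 1.
Proof.
  intros x Hx.
  assert (Hnu := nu_of_bounds snr hsnr).
  set (q := grid_ratio snr L).
  assert (Hq : 0 < q < 1) by (apply grid_ratio_bounds; assumption).
  assert (HqL : q ^ S (L - 1) = 1 - nu_of snr)
    by (replace (S (L - 1)) with L by lia; apply grid_ratio_pow_L; assumption).
  change (fun u => std_normal_cdf (mu M snr a x (u * C' / Rr))) with (Phi_mu M snr a C' Rr x).
  rewrite Rint_RInt by (apply ex_RInt_continuous_R, Phi_mu_continuous).
  rewrite gL_upper_sum, g_as_RInt by assumption.
  split; [| reflexivity].
  apply Rle_ge, Rmult_le_compat_l; [left; apply Rinv_0_lt_compat; lra |].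
  rewrite <- HqL, <- (pow_O q).
  apply (RInt_le_upper_sum _ (fun k => q ^ k)).
  - intros u v. apply ex_RInt_continuous_R, Phi_mu_continuous.
  - intros u v. now apply Phi_mu_nondecreasing.
  - intros k. simpl. assert (0 <= q ^ k) by (apply pow_le; lra). nra.
Qed.
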